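(* Let $\alpha\in(0,1]$, $x\in S$, $\pi\in\Pi$. The functional $\rho^\pi_{\alpha,x}: L^\infty(\Omega,\mathcal{B}(\Omega),P_x^\pi)\to\mathbb{R}$ is coherent, i.e., for all $Y_1,Y_2\in L^\infty$: (monotonicity) $Y_1\le Y_2$ a.e. implies $\rho^\pi_{\alpha,x}(Y_1)\le\rho^\pi_{\alpha,x}(Y_2)$; (subadditivity) $\rho^\pi_{\alpha,x}(Y_1+Y_2)\le \rho^\pi_{\alpha,x}(Y_1)+\rho^\pi_{\alpha,x}(Y_2)$; (translation equivariance) $\rho^\pi_{\alpha,x}(Y_1+a)=\rho^\pi_{\alpha,x}(Y_1)+a$ for $a\in\mathbb{R}$; (positive homogeneity) $\rho^\pi_{\alpha,x}(\lambda Y_1)=\lambda\rho^\pi_{\alpha,x}(Y_1)$ for $0\le\lambda<\infty$. Moreover, for every $Y\in L^\infty(\Omega,\mathcal{B}(\Omega),P_x^\pi)$, $$E_x^\pi(Y)\le \rho^\pi_{\alpha,x}(Y)\le \mathrm{CVaR}^\pi_{\alpha,x}(Y).$$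
   Context: Setting: $S$, $A$, $W$ are Borel spaces, $T\in\mathbb{N}$, $\Omega=(S\times A)^T\times S$ with Borel $\sigma$-algebra $\mathcal{B}(\Omega)$; $\omega=(x_0,u_0,\dots,x_{T-1},u_{T-1},x_T)$, $X_t(\omega)=x_t$, $U_t(\omega)=u_t$. $f:S\times A\times W\to S$ is Borel measurable, $P_D$ a distribution on $W$, and $Q(B\mid x,u)=P_D(\{d\in W: f(x,u,d)\in B\})$. $\Pi$ is the set of randomized history-dependent policies (Borel stochastic kernels $\pi_t$ on $A$ given $(S\times A)^t\times S$, $t=0,\dots,T-1$), and $P_x^\pi$ the induced probability measure on $\Omega$ with $X_0=x$, $U_t\sim\pi_t(\cdot\mid\text{history})$, $X_{t+1}\sim Q(\cdot\mid X_t,U_t)$; $E_x^\pi$ its expectation. For integrable $Y$, $\mathrm{CVaR}^\pi_{\alpha,x}(Y):=\inf_{s\in\mathbb{R}}(s+\tfrac1\alpha E_x^\pi(\max(Y-s,0)))$. For $(x,u)\in S\times A$, $\mathcal{R}_\alpha(x,u)$ is the set of Borel-measurable $\nu:S\to\mathbb{R}$ with $0\le\nu\le\alpha^{-1/T}$ $Q(\cdot\mid x,u)$-a.e. and $\int_S\nu\,\mathrm{d}Q(\cdot\mid x,u)=1$. $\mathcal{D}_\alpha$ is the set of tuples $(\xi_0,\dots,\xi_{T-1})$ where each $\xi_t(\cdot\mid\cdot,\cdot):S\times S\times A\to\mathbb{R}$ is Borel measurable and $\xi_t(\cdot\mid x,u)\in\mathcal{R}_\alpha(x,u)$ for every $(x,u)\in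 S\times A$. For $Y\in L^\infty(\Omega,\mathcal{B}(\Omega),P_x^\pi)$, $$\rho^\pi_{\alpha,x}(Y):=\sup_{(\xi_0,\dots,\xi_{T-1})\in\mathcal{D}_\alpha}\int_\Omega Y(\omega)\prod_{t=0}^{T-1}\xi_t(x_{t+1}\mid x_t,u_t)\,\mathrm{d}P_x^\pi(\omega).$$ *)

From HB Require Import structures.
From mathcomp Require Import all_boot all_order all_algebra.
From mathcomp Require Import all_classical all_reals all_analysis.
Set Implicit Arguments.
Unset Strict Implicit.
Unset Printing Implicit Defensive.
Import Order.TTheory GRing.Theory Num.Theory.
Local Open Scope classical_set_scope.
Local Open Scope ring_scope.

Section mdp.
Context {R : realType} {dS dA dW : measure_display}
  (S : measurableType dS) (A : measurableType dA) (W : measurableType dW).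

(* histories h_n = (x_0,u_0,...,x_{n-1},u_{n-1},x_n) in (S x A)^n x S,
   encoded as the nested product ((h_{n-1}, u_{n-1}), x_n), with the
   product sigma-algebra (= Borel sigma-algebra of the product). *)
Fixpoint histM (n : nat) : {d : measure_display & measurableType d} :=
  match n with
  | 0 => existT (fun d => measurableType d) dS S
  | n'.+1 => existT (fun d => measurableType d) _
               ((projT2 (histM n') * A) * S)%type
  end.

Definition hist (n : nat) : measurableType (projT1 (histM n)) := projT2 (histM n).

Definition last_state (n : nat) : hist n -> S :=
  match n return hist n -> S with
  | 0 => fun h => h
  | n'.+1 => fun h => h.2
  end.

Definition policy := forall t : nat, R.-pker (hist t) ~> A.

Definition Qker (f : S -> A -> W -> S) (PD : probability W R) (x : S) (u : A)
  : set S -> \bar R := pushforward PD (f x u).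

(* P_x^pi restricted to histories of length n (Ionescu-Tulcea):
   P_0 = dirac x,  P_{n+1}(B) = int P_n(dh) int pi_n(du|h) int Q(dy|x_n,u) 1_B((h,u),y) *)
Fixpoint Pxpi (f : S -> A -> W -> S) (PD : probability W R) (x : S)
  (pi : policy) (n : nat) : set (hist n) -> \bar R :=
  match n return set (hist n) -> \bar R with
  | 0 => fun B => (\1_B x)%:E
  | n'.+1 => fun B =>
      (\int[@Pxpi f PD x pi n']_h
        \int[pi n' h]_u
          \int[Qker f PD (last_state h) u]_y (\1_B ((h, u), y))%:E)%E
  end.

(* the density prod_{t=0}^{n-1} xi_t(x_{t+1} | x_t, u_t) of a history of
   length n, written recursively *)
Fixpoint weight (xi : nat -> S -> S -> A -> R) (n : nat) : hist n -> R :=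
  match n return hist n -> R with
  | 0 => fun _ => 1
  | n'.+1 => fun h =>
      weight xi h.1.1 * xi n' h.2 (last_state h.1.1) h.1.2
  end.

Definition Ralpha (f : S -> A -> W -> S) (PD : probability W R) (T : nat)
  (alpha : R) (x : S) (u : A) (nu : S -> R) : Prop :=
  measurable_fun [set: S] nu /\
  {ae Qker f PD x u, forall y, 0 <= nu y <= alpha `^ (- (T%:R)^-1)} /\
  (\int[Qker f PD x u]_y (nu y)%:E = 1)%E.

(* D_alpha : tuples (xi_0, ..., xi_{T-1}) (components of index >= T are
   irrelevant and unconstrained) *)
Definition Dalpha (f : S -> A -> W -> S) (PD : probability W R) (T : nat)
  (alpha : R) : set (nat -> S -> S -> A -> R) :=
  [set xi | forall t, (t < T)%N ->
     measurable_fun [set: S * (S * A)]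
       (fun p : S * (S * A) => xi t p.1 p.2.1 p.2.2) /\
     forall (x : S) (u : A), Ralpha f PD T alpha x u (fun y => xi t y x u)].

Section on_Omega.
Variables (f : S -> A -> W -> S) (PD : probability W R) (T : nat)
  (alpha : R) (x : S) (pi : policy).

Local Notation Omega := (hist T).
Local Notation P := (@Pxpi f PD x pi T).

Definition Linf (Y : Omega -> R) : Prop :=
  measurable_fun [set: Omega] Y /\ exists M : R, {ae P, forall w, `|Y w| <= M}.

Definition rho (Y : Omega -> R) : \bar R :=
  ereal_sup [set (\int[P]_w (Y w * weight xi w)%:E)%E | xi in Dalpha f PD T alpha].

Definition Expect (Y : Omega -> R) : \bar R := (\int[P]_w (Y w)%:E)%E.

Definition CVaR (Y : Omega -> R) : \bar R :=
  ereal_inf [set (s%:E + alpha^-1%:E * \int[P]_w (Num.max (Y w - s) 0)%:E)%E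
            | s in [set: R]].
End on_Omega.

End mdp.

From HB Require Import structures.
From mathcomp Require Import all_boot all_order all_algebra.
From mathcomp Require Import all_classical all_reals all_analysis.
From mathcomp Require Import measurable_realfun.
Import Order.TTheory GRing.Theory Num.Theory.
Local Open Scope classical_set_scope.
Local Open Scope ring_scope.

(* The set function [Pxpi ... n] (the law of the first
      [n] steps) is a probability measure: at [n.+1] it is the iterated
      semidirect product of the law at [n] with the policy kernel [pi n] and
      the transition kernel [Q].  Truncating each factor of an element [xi] of [D_alpha] to
      [[0, alpha^(-1/T)]] changes [prod_t xi_t] only on a null set; the
      truncated density is bounded by [1/alpha] and integrates to one.
   3. Reweighted expectations.  For bounded measurable [Z], [J xi Z], the
      expectation of [Z] times the truncated density, is monotone, additive,
      homogeneous and normalised in [Z], so its supremum [rsup Z] over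
      [D_alpha] has all the coherence properties; [xi = 1] gives
      [E Z <= rsup Z], and the bound [1/alpha] on the density gives
      [rsup Z <= s + E[(Z - s)^+] / alpha] for every [s].
   4. Every [Y] in L^infty agrees almost surely with a bounded measurable
      [Z], and then [rho Y = rsup Z]; each claim of the theorem follows. *)

Set Implicit Arguments.
Unset Strict Implicit.
Unset Printing Implicit Defensive.

(* The image [pushforward m g] of a measure under a measurable map, as a
   measure (the library instance needs the measurability proof [mg]). *)
Definition image_measure {R : realType} d d' (X : measurableType d)
  (Y : measurableType d') (m : {measure set X -> \bar R}) (g : X -> Y)
  (mg : measurable_fun [set: X] g) : {measure set Y -> \bar R} :=
  ltac:(refine (pushforward m g : {measure set Y -> \bar R}); exact: mg).

Lemma integral_cst_mass1 {R : realType} d (T : measurableType d)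
  (mu : {measure set T -> \bar R}) (c : \bar R) :
  mu [set: T] = 1%E -> (\int[mu]_x c = c)%E.
Proof. by move=> mu1; rewrite (integral_cst mu measurableT) mu1 mule1. Qed.

Section prob_copy.
Context {R : realType} d (T : measurableType d).
Variables (g : set T -> \bar R) (mu : probability T R).

Definition prob_copy (g_ge0 : forall B, (0 <= g B)%E)
  (g_mu : forall B, measurable B -> g B = mu B) : set T -> \bar R := g.

Hypotheses (g_ge0 : forall B, (0 <= g B)%E)
  (g_mu : forall B, measurable B -> g B = mu B).

Let copy0 : prob_copy g_ge0 g_mu set0 = 0%E.
Proof. by rewrite /prob_copy g_mu // measure0. Qed.

Let copy_sigma_additive : semi_sigma_additive (prob_copy g_ge0 g_mu).
Proof.
move=> F mF tF mUF; rewrite /prob_copy g_mu //.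
rewrite (_ : (fun n => _) = (fun n => \sum_(0 <= i < n) mu (F i))%E).
  exact: measure_semi_sigma_additive.
by apply/funext => n; apply: eq_bigr => i _; rewrite g_mu.
Qed.

HB.instance Definition _ :=
  isMeasure.Build _ _ _ (prob_copy g_ge0 g_mu) copy0 g_ge0 copy_sigma_additive.

Let copyT : prob_copy g_ge0 g_mu setT = 1%E.
Proof. by rewrite /prob_copy g_mu // probability_setT. Qed.

HB.instance Definition _ :=
  Measure_isProbability.Build _ _ _ (prob_copy g_ge0 g_mu) copyT.
End prob_copy.

(* The graph kernel of a probability kernel [k : X ~> Y]: it sends [x] to the
   image of [k x] under [y |-> (x, y)]; the (irrelevant) [unit] parameter lets
   it be composed by [kcomp] with a constant kernel. *)
Section graph_kernel.
Context {R : realType} d d' (X : measurableType d) (Y : measurableType d').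
Variable k : R.-pker X ~> Y.
Local Open Scope ereal_scope.

Definition kgraph (p : unit * X) : {measure set (X * Y) -> \bar R} :=
  image_measure (k p.2) (pair1_measurable p.2).

Let measurable_kgraph U : measurable U ->
  measurable_fun [set: unit * X] (kgraph ^~ U).
Proof.
move=> mU.
have mint : measurable_fun [set: X] (fun x => \int[k x]_y (\1_U (x, y))%:E).
  apply: (measurable_fun_integral_finite_kernel (fun p => (\1_U p)%:E)).
    by move=> z; rewrite lee_fin.
  exact/measurable_EFinP/measurable_indic.
rewrite (_ : kgraph ^~ U = (fun x => \int[k x]_y (\1_U (x, y))%:E) \o snd).
  exact: measurableT_comp mint measurable_snd.
apply/funext => -[_ x] /=; rewrite integral_indic ?setIT //.
by rewrite -[B in measurable B]setTI; exact: pair1_measurable.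
Qed.

HB.instance Definition _ := isKernel.Build _ _ _ _ _ kgraph measurable_kgraph.

Let kgraphT p : kgraph p [set: X * Y] = 1.
Proof. by rewrite /kgraph /= /pushforward preimage_setT prob_kernel. Qed.

HB.instance Definition _ := Kernel_isProbability.Build _ _ _ _ _ kgraph kgraphT.
End graph_kernel.

(* The semidirect product of a probability [mu] on [X] and a probability
   kernel [k : X ~> Y]: the law of [(x, y)] when [x ~ mu] and [y ~ k x]. *)
Section semidirect.
Context {R : realType} d d' (X : measurableType d) (Y : measurableType d').
Variables (mu : probability X R) (k : R.-pker X ~> Y).
Local Open Scope ereal_scope.

Definition semidirect : set (X * Y) -> \bar R :=
  kcomp (kprobability (measurable_cst (mu : pprobability X R))) (kgraph k) tt.

HB.instance Definition _ := Measure.on semidirect.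

Lemma integral_semidirect (g : X * Y -> \bar R) :
  (forall z, 0 <= g z) -> measurable_fun [set: X * Y] g ->
  \int[semidirect]_z g z = \int[mu]_x \int[k x]_y g (x, y).
Proof.
move=> g0 mg; rewrite /semidirect integral_kcomp //; apply: eq_integral => x _.
by rewrite /kgraph /= ge0_integral_pushforward // preimage_setT.
Qed.

Let semidirectT : semidirect [set: X * Y] = 1.
Proof.
rewrite /semidirect /kcomp /=.
under eq_integral => x _ do rewrite (@prob_kernel _ _ _ _ _ (kgraph k) (tt, x)).
by rewrite integral_cst // mul1e; exact: probability_setT.
Qed.

HB.instance Definition _ :=
  Measure_isProbability.Build _ _ _ semidirect semidirectT.
End semidirect.

Lemma integral_semidirect2 {R : realType} d d' d''
  (X : measurableType d) (A : measurableType d') (S : measurableType d'')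
  (mu : probability X R) (k : R.-pker X ~> A) (q : R.-pker (X * A) ~> S)
  (g : (X * A) * S -> \bar R) :
  (forall z, 0 <= g z)%E -> measurable_fun [set: (X * A) * S] g ->
  (\int[semidirect (semidirect mu k) q]_z g z =
   \int[mu]_h \int[k h]_u \int[q (h, u)]_y g ((h, u), y))%E.
Proof.
move=> g0 mg; rewrite integral_semidirect // integral_semidirect //.
- by move=> z; apply: integral_ge0 => y _.
- exact: (measurable_fun_integral_finite_kernel g q).
Qed.

Section transition.
Context {R : realType} {dS dA dW : measure_display}
  {S : measurableType dS} {A : measurableType dA} {W : measurableType dW}.
Variables (f : S -> A -> W -> S)
  (mf : measurable_fun [set: (S * A) * W] (fun p => f p.1.1 p.1.2 p.2))
  (PD : probability W R).
Local Open Scope ereal_scope.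

Lemma measurable_dynamics s u : measurable_fun [set: W] (f s u).
Proof.
rewrite (_ : f s u = (fun p => f p.1.1 p.1.2 p.2) \o pair (s, u)) //.
exact: measurableT_comp mf (pair1_measurable _).
Qed.

(* [Qprob] carries the measurability of the dynamics, on which its measure
   structure depends. *)
Definition Qprob
  (_ : measurable_fun [set: (S * A) * W] (fun p => f p.1.1 p.1.2 p.2)) s u :
  set S -> \bar R := Qker f PD s u.

HB.instance Definition _ s u :=
  Measure.copy (Qprob mf s u) (image_measure PD (measurable_dynamics s u)).

Lemma Qprob_setT s u : Qprob mf s u [set: S] = 1.
Proof. by rewrite /Qprob /Qker /pushforward preimage_setT probability_setT. Qed.

HB.instance Definition _ s u :=
  Measure_isProbability.Build _ _ _ (Qprob mf s u) (Qprob_setT s u).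

Section kernel.
Context {dX : measure_display} {X : measurableType dX}.
Variables (g : X -> S) (mg : measurable_fun [set: X] g).

Definition ktrans (_ : measurable_fun [set: X] g) (z : X * A) :
  {measure set S -> \bar R} := Qprob mf (g z.1) z.2.

Let measurable_ktrans U : measurable U ->
  measurable_fun [set: X * A] (ktrans mg ^~ U).
Proof.
move=> mU; pose PDk : R.-pker (X * A) ~> W :=
  kprobability (measurable_cst (PD : pprobability W R)).
have mfg : measurable_fun [set: (X * A) * W]
    (fun p => f (g p.1.1) p.1.2 p.2).
  rewrite (_ : (fun p => _) = (fun p => f p.1.1 p.1.2 p.2) \o
    (fun p : (X * A) * W => ((g p.1.1, p.1.2), p.2))) //.
  apply: measurableT_comp mf _.
  apply: measurable_fun_pair; last exact: measurable_snd.
  apply: measurable_fun_pair.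
    exact: measurableT_comp mg (measurableT_comp measurable_fst measurable_fst).
  exact: measurableT_comp measurable_snd measurable_fst.
rewrite [F in measurable_fun _ F](_ : _ =
    (fun z => \int[PDk z]_w (\1_U (f (g (z, w).1.1) (z, w).1.2 (z, w).2))%:E)).
  apply: (measurable_fun_integral_finite_kernel
    (fun p : (X * A) * W => (\1_U (f (g p.1.1) p.1.2 p.2))%:E)).
    by move=> z; rewrite lee_fin.
  by apply/measurable_EFinP; apply: measurableT_comp mfg.
apply/funext => z; rewrite integral_indic ?setIT //.
rewrite -[B in measurable B]setTI.
exact: (measurable_dynamics (g z.1) z.2 measurableT mU).
Qed.

HB.instance Definition _ :=
  isKernel.Build _ _ _ _ _ (ktrans mg) measurable_ktrans.

Let ktransT z : ktrans mg z [set: S] = 1.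
Proof. exact: probability_setT. Qed.

HB.instance Definition _ :=
  Kernel_isProbability.Build _ _ _ _ _ (ktrans mg) ktransT.
End kernel.
End transition.

Section history_law.
Context {R : realType} {dS dA dW : measure_display}
  {S : measurableType dS} {A : measurableType dA} {W : measurableType dW}.
Variables (f : S -> A -> W -> S)
  (mf : measurable_fun [set: (S * A) * W] (fun p => f p.1.1 p.1.2 p.2))
  (PD : probability W R) (x : S) (pi : @policy R _ _ S A).
Local Open Scope ereal_scope.

Local Notation P n := (@Pxpi R _ _ _ S A W f PD x pi n).
Local Notation Q := (Qprob PD mf).

Lemma measurable_last_state n :
  measurable_fun [set: hist S A n] (@last_state _ _ S A n).
Proof. by case: n => [|n]; [exact: measurable_id | exact: measurable_snd]. Qed.

Definition Qlast n : R.-pker (hist S A n * A) ~> S :=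
  ktrans mf PD (@measurable_last_state n).

Lemma Pxpi_succ n B : P n.+1 B = \int[P n]_h \int[pi n h]_u
  \int[Q (last_state h) u]_y (\1_B ((h, u), y))%:E.
Proof. by []. Qed.

Lemma Pxpi_succ_semidirect n (mu : probability (hist S A n) R) : P n = mu ->
  forall B, measurable B ->
  P n.+1 B = semidirect (semidirect mu (pi n)) (Qlast n) B.
Proof.
move=> Pmu B mB.
transitivity (\int[semidirect (semidirect mu (pi n)) (Qlast n)]_z (\1_B z)%:E).
  rewrite integral_semidirect2 //; first by rewrite Pxpi_succ Pmu.
  exact/measurable_EFinP/measurable_indic.
by rewrite integral_indic // setIT.
Qed.

(* by induction on [n], as [P n.+1] coincides with a probability measure on
   the measurable sets *)
Lemma law_hist n : exists mu : probability (hist S A n) R, P n = mu.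
Proof.
elim: n => [|n [mu Pmu]]; first by exists \d_x.
have P_ge0 B : 0 <= P n.+1 B.
  rewrite Pxpi_succ Pmu; apply: integral_ge0 => h _.
  by apply: integral_ge0 => u _; apply: integral_ge0 => y _; rewrite lee_fin.
by exists (prob_copy P_ge0 (Pxpi_succ_semidirect Pmu)).
Qed.

Lemma integral_hist_succ n (g : hist S A n.+1 -> \bar R) :
  (forall z, 0 <= g z) -> measurable_fun [set: hist S A n.+1] g ->
  \int[P n.+1]_z g z =
  \int[P n]_h \int[pi n h]_u \int[Q (last_state h) u]_y g ((h, u), y).
Proof.
move=> g0 mg; have [mu Pmu] := law_hist n; have [nu Pnu] := law_hist n.+1.
rewrite Pnu (eq_measure_integral (semidirect (semidirect mu (pi n)) (Qlast n))).
  by rewrite integral_semidirect2 // Pmu.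
move=> B mB _; apply: eq_trans (Pxpi_succ_semidirect Pmu mB).
by rewrite Pnu.
Qed.

Lemma Pxpi_cylinder n (N : set (hist S A n)) : measurable N ->
  P n.+1 ((N `*` [set: A]) `*` [set: S]) = P n N.
Proof.
move=> mN; have [mu Pmu] := law_hist n.
have indicN h u y :
    \1_((N `*` [set: A]) `*` [set: S]) ((h, u), y) = \1_N h :> R.
  by rewrite !indicE !in_setX !in_setT !andbT.
rewrite Pxpi_succ Pmu.
under eq_integral do under eq_integral do under eq_integral do rewrite indicN.
under eq_integral do under eq_integral do
  rewrite (integral_cst_mass1 _ (Qprob_setT _ _ _ _)).
under eq_integral do rewrite (integral_cst_mass1 _ (prob_kernel _)).
by rewrite integral_indic // setIT.
Qed.

Lemma Pxpi_null_sections n (M : set (hist S A n.+1)) : measurable M ->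
  (forall h u, Q (last_state h) u [set y | M ((h, u), y)] = 0) ->
  P n.+1 M = 0.
Proof.
move=> mM QM0; have [mu Pmu] := law_hist n.
rewrite Pxpi_succ Pmu; apply: integral0_eq => h _; apply: integral0_eq => u _.
have mMhu : measurable [set y | M ((h, u), y)].
  rewrite -[B in measurable B]setTI.
  exact: (pair1_measurable (h, u) measurableT mM).
by rewrite integral_indic // setIT; exact: QM0.
Qed.

Lemma ae_hist_succ n (p : hist S A n -> Prop) (M : set (hist S A n.+1)) :
  measurable M -> {ae P n, forall h, p h} ->
  (forall h u, Q (last_state h) u [set y | M ((h, u), y)] = 0) ->
  {ae P n.+1, forall z, p z.1.1 /\ ~ M z}.
Proof.
move=> mM [N [mN PN0 Nsub]] QM0.
pose C := (N `*` [set: A]) `*` [set: S].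
have mC : measurable C by apply: measurableX => //; exact: measurableX.
have C0 : P n.+1 C = 0 by rewrite Pxpi_cylinder.
have M0 : P n.+1 M = 0 := Pxpi_null_sections mM QM0.
exists (C `|` M); split; first exact: measurableU.
  have [nu Pnu] := law_hist n.+1; rewrite Pnu in C0 M0 *.
  apply/eqP; rewrite eq_le measure_ge0 andbT.
  apply: le_trans (measureU2 _ mC mM) _; rewrite -[leRHS](adde0 0).
  by apply: leeD; rewrite le_eqVlt; apply/orP; left; apply/eqP;
    [exact: C0 | exact: M0].
by move=> [[h u] y] /= /not_andP [/Nsub Nh | /contrapT My]; [left | right].
Qed.
End history_law.

Section weight_measurable.
Context {R : realType} {dS dA : measure_display}
  {S : measurableType dS} {A : measurableType dA}.

Definition measurable_factor (xi : nat -> S -> S -> A -> R) t :=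
  measurable_fun [set: S * (S * A)] (fun p => xi t p.1 p.2.1 p.2.2).

Lemma measurable_last_factor xi n : measurable_factor xi n ->
  measurable_fun [set: hist S A n.+1]
    (fun z : hist S A n.+1 => xi n z.2 (last_state z.1.1) z.1.2).
Proof.
move=> mxi.
rewrite (_ : (fun z => _) = (fun p : S * (S * A) => xi n p.1 p.2.1 p.2.2) \o
  (fun z : hist S A n.+1 => (z.2, (last_state z.1.1, z.1.2)))) //.
apply: measurableT_comp mxi _.
apply: measurable_fun_pair; first exact: measurable_snd.
apply: measurable_fun_pair.
  exact: measurableT_comp (@measurable_last_state _ _ _ _ n)
    (measurableT_comp measurable_fst measurable_fst).
exact: measurableT_comp measurable_snd measurable_fst.
Qed.

Lemma measurable_weight xi n :
  (forall t, (t < n)%N -> measurable_factor xi t) ->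
  measurable_fun [set: hist S A n] (weight xi (n := n)).
Proof.
elim: n => [|n IH] mxi; first exact: measurable_cst.
apply: measurable_funM; last exact: measurable_last_factor (mxi n (ltnSn n)).
apply: measurableT_comp (IH _) (measurableT_comp measurable_fst measurable_fst).
by move=> t tn; apply: mxi; exact: ltnW.
Qed.
End weight_measurable.

Section densities.
Context {R : realType} {dS dA dW : measure_display}
  {S : measurableType dS} {A : measurableType dA} {W : measurableType dW}.
Variables (f : S -> A -> W -> S)
  (mf : measurable_fun [set: (S * A) * W] (fun p => f p.1.1 p.1.2 p.2))
  (PD : probability W R) (x : S) (pi : @policy R _ _ S A)
  (T : nat) (alpha : R).
Hypotheses (hT : (0 < T)%N) (halpha : 0 < alpha <= 1).

Local Notation P n := (@Pxpi R _ _ _ S A W f PD x pi n).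
Local Notation Q := (Qprob PD mf).
Local Notation D := (Dalpha f PD T alpha).

Definition cap : R := alpha `^ (- (T%:R)^-1).

Lemma cap_ge0 : 0 <= cap. Proof. exact: powR_ge0. Qed.

Lemma cap_expT : cap ^+ T = alpha^-1.
Proof.
have a0 : 0 <= alpha by case/andP: halpha => /ltW.
rewrite /cap -powR_mulrn ?powR_ge0 // -powRrM mulNr mulVf ?powRN ?powRr1 //.
by rewrite pnatr_eq0 -lt0n.
Qed.

Lemma cap_ge1 : 1 <= cap.
Proof.
rewrite -(expr_ge1 hT cap_ge0) cap_expT invf_ge1 //; by case/andP: halpha.
Qed.

(* Truncation of the factors to [[0, cap]].  For [xi] in [D_alpha] this only
   changes each factor on a [Q]-null set, and the bounds then hold
   everywhere instead of almost everywhere. *)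
Definition clip (xi : nat -> S -> S -> A -> R) : nat -> S -> S -> A -> R :=
  fun t y s u => Num.min (Num.max (xi t y s u) 0) cap.

Lemma clip_ge0 xi t y s u : 0 <= clip xi t y s u.
Proof. by rewrite /clip le_min le_max lexx orbT cap_ge0. Qed.

Lemma clip_le_cap xi t y s u : clip xi t y s u <= cap.
Proof. by rewrite /clip ge_min lexx orbT. Qed.

Lemma clip_id xi t y s u :
  0 <= xi t y s u <= cap -> clip xi t y s u = xi t y s u.
Proof. by case/andP => xi0 xic; rewrite /clip max_l // min_l. Qed.

Lemma measurable_factor_clip xi t :
  measurable_factor xi t -> measurable_factor (clip xi) t.
Proof.
move=> mxi; apply: measurable_minr; last exact: measurable_cst.
by apply: measurable_maxr => //; exact: measurable_cst.
Qed.

Lemma Dalpha_factor xi t : D xi -> (t < T)%N -> measurable_factor xi t.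
Proof. by move=> Dxi tT; have [] := Dxi t tT. Qed.

Lemma weight_clip_bound xi n (h : hist S A n) :
  0 <= weight (clip xi) h <= cap ^+ n.
Proof.
elim: n h => [|n IH] h /=; first by rewrite ler01 lexx.
have /andP[w0 wc] := IH h.1.1.
by rewrite mulr_ge0 ?clip_ge0 //= exprSr ler_pM ?clip_ge0 ?clip_le_cap.
Qed.

Lemma clip_ae xi t s u : D xi -> (t < T)%N ->
  {ae Q s u, forall y, clip xi t y s u = xi t y s u}.
Proof.
move=> Dxi tT; have [_ /(_ s u) [_ [xi_ae _]]] := Dxi t tT.
have xi_ae' : {ae Q s u, forall y, 0 <= xi t y s u <= cap} := xi_ae.
by apply: filterS xi_ae' => y /clip_id.
Qed.

Lemma integral_clip xi t s u : D xi -> (t < T)%N ->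
  (\int[Q s u]_y (clip xi t y s u)%:E = 1)%E.
Proof.
move=> Dxi tT; have [mxi /(_ s u) [mxisu [_ xi1]]] := Dxi t tT.
rewrite (ae_eq_integral (fun y => (xi t y s u)%:E)) //.
- apply/measurable_EFinP.
  exact: measurableT_comp (measurable_factor_clip mxi)
    (pair2_measurable (s, u)).
- exact/measurable_EFinP/mxisu.
- by apply: filterS (clip_ae s u Dxi tT) => y -> _.
Qed.

Lemma weight_clip_ae xi n : D xi -> (n <= T)%N ->
  {ae P n, forall h, weight xi h = weight (clip xi) h}.
Proof.
move=> Dxi; elim: n => [|n IH] nT.
  by have [mu ->] := law_hist mf PD x pi 0; exact: aeW.
pose g1 (z : hist S A n.+1) := xi n z.2 (last_state z.1.1) z.1.2.
pose g2 (z : hist S A n.+1) := clip xi n z.2 (last_state z.1.1) z.1.2.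
have mxi := Dalpha_factor Dxi nT.
have mg1 : measurable_fun setT g1 by exact: measurable_last_factor.
have mg2 : measurable_fun setT g2.
  exact: measurable_last_factor (measurable_factor_clip mxi).
pose M := [set z | g1 z != g2 z].
have mM : measurable M.
  have := measurable_funB mg1 mg2 measurableT (measurableC (measurable_set1 0)).
  rewrite setTI; congr measurable; apply/seteqP; split => z /=.
    by move=> /eqP; rewrite subr_eq0.
  by move=> g12; apply/eqP; rewrite subr_eq0.
have QM0 h u : Q (last_state h) u [set y | M ((h, u), y)] = 0%E.
  have [N [mN QN0 Nsub]] := clip_ae (last_state h) u Dxi nT.
  apply/eqP; rewrite eq_le measure_ge0 andbT.
  have <- : Q (last_state h) u N = 0%E := QN0.
  apply: le_measure; rewrite ?inE //.
    rewrite -[B in measurable B]setTI.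
    exact: (pair1_measurable (h, u) measurableT mM).
  move=> y /= g12; apply: Nsub => /= clip_xi; move: g12.
  by rewrite /M /g1 /g2 /= clip_xi eqxx.
have := ae_hist_succ mM (IH (ltnW nT)) QM0.
have [nu ->] := law_hist mf PD x pi n.+1.
apply: filterS => -[[h u] y] [/= wh /negP]; rewrite negbK => /eqP g12.
by rewrite wh; congr (_ * _); exact: g12.
Qed.

Lemma integral_weight_clip xi n : D xi -> (n <= T)%N ->
  (\int[P n]_h (weight (clip xi) h)%:E = 1)%E.
Proof.
move=> Dxi; elim: n => [|n IH] nT.
  have [mu ->] := law_hist mf PD x pi 0.
  by rewrite /=; apply: integral_cst_mass1; exact: probability_setT.
have mclip t : (t < n.+1)%N -> measurable_factor (clip xi) t.
  move=> tn; apply: measurable_factor_clip.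
  exact: Dalpha_factor Dxi (leq_trans tn nT).
rewrite integral_hist_succ //; last 2 first.
- by move=> z; rewrite lee_fin; have /andP[] := weight_clip_bound xi z.
- exact/measurable_EFinP/measurable_weight.
have last_step h u : (\int[Q (last_state h) u]_y
    (weight (clip xi) (n := n.+1) ((h, u), y))%:E = (weight (clip xi) h)%:E)%E.
  under eq_integral do rewrite /= EFinM.
  rewrite ge0_integralZl //.
  - by rewrite integral_clip // mule1.
  - apply/measurable_EFinP.
    exact: measurableT_comp (mclip n (ltnSn n))
      (pair2_measurable (last_state h, u)).
  - by move=> y _; rewrite lee_fin clip_ge0.
  - by rewrite lee_fin; have /andP[] := weight_clip_bound xi h.
have [mu Pmu] := law_hist mf PD x pi n; rewrite Pmu in IH *.
under eq_integral do under eq_integral do rewrite last_step.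
under eq_integral do rewrite (integral_cst_mass1 _ (prob_kernel _)).
exact: IH (ltnW nT).
Qed.

Definition xi_one : nat -> S -> S -> A -> R := fun _ _ _ _ => 1.

Lemma Dalpha_one : D xi_one.
Proof.
move=> t tT; split; first exact: measurable_cst.
move=> s u; split; first exact: measurable_cst.
split.
  change {ae Q s u, forall y, 0 <= xi_one t y s u <= cap}.
  by apply: aeW => y; rewrite /xi_one ler01 cap_ge1.
change (\int[Q s u]_y 1%:E = 1)%E.
by apply: integral_cst_mass1; exact: Qprob_setT.
Qed.

Lemma weight_one n (h : hist S A n) : weight xi_one h = 1.
Proof. by elim: n h => [|n IH] h //=; rewrite IH mulr1. Qed.
End densities.

Lemma ereal_sup_addr {R : realType} {I : Type} (X : set I) (g : I -> \bar R)
  (a : R) : (ereal_sup [set g i + a%:E | i in X] =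
             ereal_sup [set g i | i in X] + a%:E)%E.
Proof.
apply/eqP; rewrite eq_le; apply/andP; split.
  apply: ge_ereal_sup => _ [i Xi <-]; apply: leeD2r.
  by apply: ereal_sup_ubound; exists i.
have sup_le : (ereal_sup [set g i | i in X] <=
    ereal_sup [set g i + a%:E | i in X] - a%:E)%E.
  apply: ge_ereal_sup => _ [i Xi <-].
  rewrite -[g i](addeK _ (fin_numE a%:E)); apply: leeD2r.
  by apply: ereal_sup_ubound; exists i.
by apply: le_trans (leeD2r _ sup_le) _; rewrite subeK.
Qed.

(* Bounded measurable real functions: the class on which the reweighted
   expectations below are finite, linear and monotone. *)
Section bounded_mfun.
Context {R : realType} d (O : measurableType d).

Definition bounded_mfun (Z : O -> R) :=
  measurable_fun [set: O] Z /\ exists M : R, forall h, `|Z h| <= M.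

Lemma bounded_mfun_cst (a : R) : bounded_mfun (fun _ => a).
Proof. by split; [exact: measurable_cst | exists `|a|]. Qed.

Lemma bounded_mfunD Z1 Z2 : bounded_mfun Z1 -> bounded_mfun Z2 ->
  bounded_mfun (fun h => Z1 h + Z2 h).
Proof.
move=> [mZ1 [M1 hM1]] [mZ2 [M2 hM2]]; split; first exact: measurable_funD.
by exists (M1 + M2) => h; rewrite (le_trans (ler_normD _ _)) // lerD.
Qed.

Lemma bounded_mfunM Z1 Z2 : bounded_mfun Z1 -> bounded_mfun Z2 ->
  bounded_mfun (fun h => Z1 h * Z2 h).
Proof.
move=> [mZ1 [M1 hM1]] [mZ2 [M2 hM2]]; split; first exact: measurable_funM.
by exists (M1 * M2) => h; rewrite normrM ler_pM.
Qed.

Lemma bounded_mfun_min Z1 Z2 : bounded_mfun Z1 -> bounded_mfun Z2 ->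
  bounded_mfun (fun h => Num.min (Z1 h) (Z2 h)).
Proof.
move=> [mZ1 [M1 hM1]] [mZ2 [M2 hM2]]; split; first exact: measurable_minr.
exists (Num.max M1 M2) => h; rewrite /Num.min; case: ifP => _.
  by rewrite le_max hM1.
by rewrite le_max hM2 orbT.
Qed.

Lemma bounded_mfun_max0 Z :
  bounded_mfun Z -> bounded_mfun (fun h => Num.max (Z h) 0).
Proof.
move=> [mZ [M hM]]; split.
  by apply: measurable_maxr => //; exact: measurable_cst.
exists M => h; rewrite /Num.max; case: ifP => _ //.
by rewrite normr0 (le_trans (normr_ge0 _) (hM h)).
Qed.

Lemma integrable_bounded_mfun (mu : probability O R) Z :
  bounded_mfun Z -> mu.-integrable [set: O] (EFin \o Z).
Proof.
move=> [mZ [M hM]]; apply/integrableP; split; first exact/measurable_EFinP.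
apply: (@le_lt_trans _ _ (\int[mu]_h M%:E)%E).
  apply: ge0_le_integral => //.
  - by apply/measurable_EFinP; exact: measurableT_comp.
  - by move=> h _ /=; rewrite lee_fin.
by rewrite integral_cst_mass1 ?ltry //; exact: probability_setT.
Qed.
End bounded_mfun.

Section reweighted.
Context {R : realType} {dS dA dW : measure_display}
  {S : measurableType dS} {A : measurableType dA} {W : measurableType dW}.
Variables (f : S -> A -> W -> S)
  (mf : measurable_fun [set: (S * A) * W] (fun p => f p.1.1 p.1.2 p.2))
  (PD : probability W R) (x : S) (pi : @policy R _ _ S A)
  (T : nat) (alpha : R).
Hypotheses (hT : (0 < T)%N) (halpha : 0 < alpha <= 1).
Variables (mu : probability (hist S A T) R)
  (Pmu : @Pxpi R _ _ _ S A W f PD x pi T = mu).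

Local Notation D := (Dalpha f PD T alpha).
Local Notation clip := (clip T alpha).

Definition dens xi : hist S A T -> R := weight (clip xi) (n := T).

Lemma dens_bound xi h : 0 <= dens xi h <= alpha^-1.
Proof. by rewrite -(cap_expT hT halpha); exact: weight_clip_bound. Qed.

Lemma bounded_dens xi : D xi -> bounded_mfun (dens xi).
Proof.
move=> Dxi; split.
  apply: measurable_weight => t tT.
  exact: measurable_factor_clip (Dalpha_factor Dxi tT).
exists alpha^-1 => h; have /andP[d0 d1] := dens_bound xi h.
by rewrite ger0_norm.
Qed.

Lemma integral_dens xi : D xi -> (\int[mu]_h (dens xi h)%:E = 1)%E.
Proof. by move=> Dxi; rewrite -Pmu; exact: integral_weight_clip. Qed.

Definition J xi (Z : hist S A T -> R) : \bar R :=
  \int[mu]_h (Z h * dens xi h)%:E.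

Section J_bounded.
Variable xi : nat -> S -> S -> A -> R.
Hypothesis Dxi : D xi.

Let integrable_J Z : bounded_mfun Z ->
  mu.-integrable [set: hist S A T] (EFin \o (fun h => Z h * dens xi h)).
Proof.
by move=> bZ; apply/integrable_bounded_mfun/bounded_mfunM/bounded_dens.
Qed.

Lemma J_le Z1 Z2 : bounded_mfun Z1 -> bounded_mfun Z2 ->
  (forall h, Z1 h <= Z2 h) -> (J xi Z1 <= J xi Z2)%E.
Proof.
move=> bZ1 bZ2 Z12; apply: le_integral => //; [exact: integrable_J.. |].
move=> h _; rewrite lee_fin ler_wpM2r //.
by have /andP[] := dens_bound xi h.
Qed.

Lemma J_add Z1 Z2 : bounded_mfun Z1 -> bounded_mfun Z2 ->
  J xi (fun h => Z1 h + Z2 h) = (J xi Z1 + J xi Z2)%E.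
Proof.
move=> bZ1 bZ2; rewrite /J -integralD_EFin //; [|exact: integrable_J..].
by apply: eq_integral => h _ /=; rewrite mulrDl.
Qed.

Lemma J_scale (r : R) Z : bounded_mfun Z ->
  J xi (fun h => r * Z h) = (r%:E * J xi Z)%E.
Proof.
move=> bZ; rewrite /J -integralZl //; last exact: integrable_J.
by apply: eq_integral => h _ /=; rewrite -mulrA EFinM.
Qed.

Lemma J_cst (a : R) : J xi (fun _ => a) = a%:E.
Proof.
rewrite /J -[RHS]mule1 -(integral_dens Dxi) -integralZl //.
exact/integrable_bounded_mfun/bounded_dens.
Qed.
End J_bounded.

Let D_one : D xi_one. Proof. exact: Dalpha_one. Qed.

Definition rsup Z := ereal_sup [set J xi Z | xi in D].

Lemma J_le_rsup xi Z : D xi -> (J xi Z <= rsup Z)%E.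
Proof. by move=> Dxi; apply: ereal_sup_ubound; exists xi. Qed.

Lemma rsup_fin Z : bounded_mfun Z -> rsup Z \is a fin_num.
Proof.
move=> bZ; have [_ [M ZM]] := bZ.
have J_bound xi : D xi -> ((- M)%:E <= J xi Z <= M%:E)%E.
  move=> Dxi; rewrite -(J_cst Dxi (- M)) -(J_cst Dxi M).
  apply/andP; split; apply: J_le => //; try exact: bounded_mfun_cst;
    by move=> h; have := ZM h; rewrite ler_norml => /andP[].
rewrite fin_numElt; apply/andP; split.
  apply: lt_le_trans (J_le_rsup Z D_one).
  by apply: lt_le_trans (ltNyr (- M)) _; have /andP[] := J_bound _ D_one.
apply: le_lt_trans (ltry M); apply: ge_ereal_sup => _ [xi Dxi <-].
by have /andP[] := J_bound xi Dxi.
Qed.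

Lemma rsup_le Z1 Z2 : bounded_mfun Z1 -> bounded_mfun Z2 ->
  (forall h, Z1 h <= Z2 h) -> (rsup Z1 <= rsup Z2)%E.
Proof.
move=> bZ1 bZ2 Z12; apply: ge_ereal_sup => _ [xi Dxi <-].
exact: le_trans (J_le Dxi bZ1 bZ2 Z12) (J_le_rsup _ Dxi).
Qed.

Lemma rsup_add Z1 Z2 : bounded_mfun Z1 -> bounded_mfun Z2 ->
  (rsup (fun h => (Z1 h + Z2 h)%R) <= rsup Z1 + rsup Z2)%E.
Proof.
move=> bZ1 bZ2; apply: ge_ereal_sup => _ [xi Dxi <-].
by rewrite J_add //; apply: leeD; exact: J_le_rsup.
Qed.

Lemma rsup_translate Z (a : R) : bounded_mfun Z ->
  rsup (fun h => Z h + a) = (rsup Z + a%:E)%E.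
Proof.
move=> bZ; rewrite /rsup -ereal_sup_addr; congr ereal_sup.
apply: eq_imagel => xi Dxi.
by rewrite J_add // ?J_cst //; exact: bounded_mfun_cst.
Qed.

Lemma rsup_scale Z (l : R) : bounded_mfun Z -> 0 <= l ->
  rsup (fun h => l * Z h) = (l%:E * rsup Z)%E.
Proof.
move=> bZ l0; rewrite /rsup -ereal_supZl //; last first.
  by apply/set0P; exists (J xi_one Z); exists xi_one.
congr ereal_sup; apply/seteqP; split.
  by move=> _ [xi Dxi <-]; exists (J xi Z); [exists xi | rewrite J_scale].
by move=> _ [_ [xi Dxi <-] <-]; exists xi => //; rewrite J_scale.
Qed.

Lemma dens_one h : dens xi_one h = 1.
Proof.
rewrite /dens (_ : clip xi_one = xi_one) ?weight_one //.
do 4 apply/funext => ?; apply: clip_id.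
by rewrite /xi_one ler01 cap_ge1.
Qed.

(* the expectation is the reweighted expectation for [xi = 1] *)
Lemma expectation_le_rsup Z : (\int[mu]_h (Z h)%:E <= rsup Z)%E.
Proof.
apply: le_trans (J_le_rsup Z D_one); rewrite le_eqVlt; apply/orP; left.
by apply/eqP; apply: eq_integral => h _; rewrite dens_one mulr1.
Qed.

(* the bound [s + E[(Z - s)^+] / alpha] of each reweighted expectation,
   from [Z <= s + (Z - s)^+] and [dens xi <= 1/alpha] *)
Lemma rsup_le_cvar Z (s : R) : bounded_mfun Z ->
  (rsup Z <= s%:E + alpha^-1%:E * \int[mu]_h (Num.max (Z h - s) 0)%:E)%E.
Proof.
move=> bZ; pose G h := Num.max (Z h - s) 0.
have bZs : bounded_mfun (fun h => Z h - s).
  by apply: bounded_mfunD => //; exact: bounded_mfun_cst.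
have bG : bounded_mfun G by exact: bounded_mfun_max0.
apply: ge_ereal_sup => _ [xi Dxi <-].
have -> : J xi Z = J xi (fun h => s + (Z h - s)).
  by congr J; apply/funext => h; rewrite addrC subrK.
rewrite J_add ?J_cst //; last exact: bounded_mfun_cst.
apply: leeD2l; apply: (@le_trans _ _ (J xi G)).
  by apply: J_le => // h; rewrite /G le_max lexx.
rewrite -integralZl //; last exact: integrable_bounded_mfun.
apply: le_integral => //.
- exact/integrable_bounded_mfun/bounded_mfunM/bounded_dens.
- exact/integrableZl/integrable_bounded_mfun.
move=> h _ /=; rewrite -EFinM lee_fin [X in _ <= X]mulrC ler_wpM2l //.
  by rewrite /G le_max lexx orbT.
by have /andP[] := dens_bound xi h.
Qed.
End reweighted.

Section rho_properties.
Context {R : realType} {dS dA dW : measure_display}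
  {S : measurableType dS} {A : measurableType dA} {W : measurableType dW}.
Variables (f : S -> A -> W -> S)
  (mf : measurable_fun [set: (S * A) * W] (fun p => f p.1.1 p.1.2 p.2))
  (PD : probability W R) (x : S) (pi : @policy R _ _ S A)
  (T : nat) (alpha : R).
Hypotheses (hT : (0 < T)%N) (halpha : 0 < alpha <= 1).
Variables (mu : probability (hist S A T) R)
  (Pmu : @Pxpi R _ _ _ S A W f PD x pi T = mu).

Local Notation P := (@Pxpi R _ _ _ S A W f PD x pi T).
Local Notation L := (Linf f PD x pi (T := T)).
Local Notation rh := (rho f PD alpha x pi (T := T)).
Local Notation rsup := (rsup f PD alpha mu).
Local Open Scope ereal_scope.

Lemma integral_ae_eq (g1 g2 : hist S A T -> R) :
  measurable_fun [set: hist S A T] g1 -> measurable_fun [set: hist S A T] g2 ->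
  {ae mu, forall h, g1 h = g2 h} ->
  \int[P]_h (g1 h)%:E = \int[mu]_h (g2 h)%:E.
Proof.
move=> mg1 mg2 g12; rewrite Pmu; apply: ae_eq_integral => //.
- exact/measurable_EFinP.
- exact/measurable_EFinP.
- by apply: filterS g12 => h -> _.
Qed.

(* An element of L^infty agrees almost surely with its truncation at an
   essential bound, which is a bounded measurable function. *)
Lemma Linf_bounded_version Y : L Y ->
  exists Z, bounded_mfun Z /\ {ae mu, forall h, Y h = Z h}.
Proof.
move=> [mY [M YM]]; pose M' := Num.max M 0%R.
have M'0 : (0 <= M')%R by rewrite /M' le_max lexx orbT.
exists (fun h => Num.max (Num.min (Y h) M') (- M')%R); split.
  split.
    apply: measurable_maxr; last exact: measurable_cst.
    by apply: measurable_minr => //; exact: measurable_cst.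
  exists M' => h.
  rewrite ler_norml le_max lexx orbT /= ge_max ge_min lexx orbT /=.
  by apply: (le_trans _ M'0); rewrite oppr_le0.
rewrite Pmu in YM; apply: filterS YM => h; rewrite ler_norml => /andP[YM1 YM2].
have MM' : (M <= M')%R by rewrite /M' le_max lexx.
rewrite min_l; last exact: le_trans MM'.
by rewrite max_l //; apply: le_trans YM1; rewrite lerN2.
Qed.

Lemma rho_rsup Y Z : measurable_fun [set: hist S A T] Y -> bounded_mfun Z ->
  {ae mu, forall h, Y h = Z h} -> rh Y = rsup Z.
Proof.
move=> mY [mZ _] YZ; congr ereal_sup; apply: eq_imagel => xi Dxi.
apply: integral_ae_eq.
- apply: measurable_funM => //; apply: measurable_weight => t tT.
  exact: Dalpha_factor Dxi tT.
- by apply: measurable_funM => //; have [] := bounded_dens hT halpha Dxi.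
- have := weight_clip_ae mf x pi Dxi (leqnn T); rewrite Pmu => w_ae.
  by apply: filterS2 YZ w_ae => h -> ->.
Qed.

Lemma rho_fin Y : L Y -> rh Y \is a fin_num.
Proof.
move=> LY; have [Z [bZ YZ]] := Linf_bounded_version LY.
by rewrite (rho_rsup LY.1 bZ YZ); exact: (rsup_fin mf hT halpha Pmu bZ).
Qed.

(* [min Z1 Z2] is a bounded version of [Y1] below the bounded version [Z2]
   of [Y2] *)
Lemma rho_monotone Y1 Y2 : L Y1 -> L Y2 ->
  {ae P, forall w, (Y1 w <= Y2 w)%R} -> rh Y1 <= rh Y2.
Proof.
move=> LY1 LY2 Y12; have [Z1 [bZ1 YZ1]] := Linf_bounded_version LY1.
have [Z2 [bZ2 YZ2]] := Linf_bounded_version LY2.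
have bZ := bounded_mfun_min bZ1 bZ2.
rewrite (rho_rsup LY2.1 bZ2 YZ2) (rho_rsup LY1.1 bZ); last first.
  rewrite Pmu in Y12; apply: filterS3 YZ1 YZ2 Y12 => h YZ1h YZ2h Y12h.
  by rewrite -YZ1h -YZ2h min_l.
by apply: (rsup_le f PD hT halpha mu) => // h; rewrite ge_min lexx orbT.
Qed.

Lemma rho_subadditive Y1 Y2 : L Y1 -> L Y2 ->
  rh (fun w => Y1 w + Y2 w)%R <= rh Y1 + rh Y2.
Proof.
move=> LY1 LY2; have [Z1 [bZ1 YZ1]] := Linf_bounded_version LY1.
have [Z2 [bZ2 YZ2]] := Linf_bounded_version LY2.
rewrite (rho_rsup LY1.1 bZ1 YZ1) (rho_rsup LY2.1 bZ2 YZ2).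
rewrite (rho_rsup (measurable_funD LY1.1 LY2.1) (bounded_mfunD bZ1 bZ2)).
  exact: (rsup_add f PD hT halpha mu).
by apply: filterS2 YZ1 YZ2 => h /= -> ->.
Qed.

Lemma rho_translate Y (a : R) : L Y -> rh (fun w => Y w + a)%R = rh Y + a%:E.
Proof.
move=> LY; have [Z [bZ YZ]] := Linf_bounded_version LY.
have mYa : measurable_fun setT (fun w => Y w + a)%R.
  by apply: measurable_funD LY.1 _; exact: measurable_cst.
rewrite (rho_rsup LY.1 bZ YZ).
rewrite (rho_rsup mYa (bounded_mfunD bZ (bounded_mfun_cst _ a))).
  exact: (rsup_translate mf hT halpha Pmu).
by apply: filterS YZ => h ->.
Qed.

Lemma rho_homogeneous Y (l : R) : L Y -> (0 <= l)%R ->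
  rh (fun w => l * Y w)%R = l%:E * rh Y.
Proof.
move=> LY l0; have [Z [bZ YZ]] := Linf_bounded_version LY.
have mlY : measurable_fun setT (fun w => l * Y w)%R.
  by apply: measurable_funM LY.1; exact: measurable_cst.
rewrite (rho_rsup LY.1 bZ YZ).
rewrite (rho_rsup mlY (bounded_mfunM (bounded_mfun_cst _ l) bZ)).
  exact: (rsup_scale mf PD hT halpha mu).
by apply: filterS YZ => h ->.
Qed.

Lemma expectation_le_rho Y : L Y -> Expect f PD x pi Y <= rh Y.
Proof.
move=> LY; have [Z [bZ YZ]] := Linf_bounded_version LY.
rewrite (rho_rsup LY.1 bZ YZ) /Expect (integral_ae_eq LY.1 bZ.1 YZ).
exact: (expectation_le_rsup mf PD hT halpha mu).
Qed.

Lemma rho_le_CVaR Y : L Y -> rh Y <= CVaR f PD alpha x pi Y.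
Proof.
move=> LY; have [Z [bZ YZ]] := Linf_bounded_version LY.
rewrite (rho_rsup LY.1 bZ YZ); apply: le_ereal_inf_tmp => _ [s _ <-].
have mmax (g : hist S A T -> R) : measurable_fun setT g ->
    measurable_fun setT (fun h => Num.max (g h - s) 0)%R.
  move=> mg; apply: measurable_maxr; last exact: measurable_cst.
  by apply: measurable_funB => //; exact: measurable_cst.
rewrite (integral_ae_eq (mmax _ LY.1) (mmax _ bZ.1)); last first.
  by apply: filterS YZ => h ->.
exact: (rsup_le_cvar mf hT halpha Pmu).
Qed.
End rho_properties.

Unset Implicit Arguments.

Theorem lemma5 (R : realType) (dS dA dW : measure_display)
  (S : measurableType dS) (A : measurableType dA) (W : measurableType dW)
  (T : nat) (hT : (0 < T)%N)
  (f : S -> A -> W -> S)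
  (mf : measurable_fun [set: (S * A) * W] (fun p => f p.1.1 p.1.2 p.2))
  (PD : probability W R) (alpha : R) (halpha : 0 < alpha <= 1)
  (x : S) (pi : @policy R _ _ S A) :
  let P := @Pxpi R _ _ _ S A W f PD x pi T in
  let L := Linf f PD x pi (T := T) in
  let rh := rho f PD alpha x pi (T := T) in
  (* rho^pi_{alpha,x} is real-valued on L^infty *)
  (forall Y, L Y -> rh Y \is a fin_num) /\
  (* monotonicity *)
  (forall Y1 Y2, L Y1 -> L Y2 -> {ae P, forall w, (Y1 w <= Y2 w)%R} ->
     (rh Y1 <= rh Y2)%E) /\
  (* subadditivity *)
  (forall Y1 Y2, L Y1 -> L Y2 ->
     (rh (fun w => (Y1 w + Y2 w)%R) <= rh Y1 + rh Y2)%E) /\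
  (* translation equivariance *)
  (forall Y1 (a : R), L Y1 -> rh (fun w => Y1 w + a) = (rh Y1 + a%:E)%E) /\
  (* positive homogeneity *)
  (forall Y1 (lambda : R), L Y1 -> 0 <= lambda ->
     rh (fun w => lambda * Y1 w) = (lambda%:E * rh Y1)%E) /\
  (* E_x^pi(Y) <= rho(Y) <= CVaR(Y) *)
  (forall Y, L Y ->
     (Expect f PD x pi Y <= rh Y)%E /\ (rh Y <= CVaR f PD alpha x pi Y)%E).
Proof.
have [mu Pmu] := law_hist mf PD x pi T.
move=> P L rh.
split; first by move=> Y; exact: (rho_fin mf hT halpha Pmu (Y := Y)).
split; first by move=> Y1 Y2; exact: (rho_monotone mf hT halpha Pmu (Y1 := Y1)).
split.
  by move=> Y1 Y2; exact: (rho_subadditive mf hT halpha Pmu (Y1 := Y1)).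
split; first by move=> Y a; exact: (rho_translate mf hT halpha Pmu (Y := Y) a).
split; first by move=> Y l; exact: (rho_homogeneous mf hT halpha Pmu (Y := Y)).
move=> Y LY; split.
  exact: (expectation_le_rho mf hT halpha Pmu (Y := Y)).
exact: (rho_le_CVaR mf hT halpha Pmu (Y := Y)).
Qed.
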